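(* Let $G$ be a connected graph of order $n\geq 2$. Then $\mathrm{ldim}_f(G)\geq \dfrac{n}{n-\mathrm{ldim}(G)+1}$.
   Context: All graphs are finite, simple and connected; $d$ is the shortest-path distance. For an edge $uv$, $L(uv)=\{x\in V(G): d(u,x)\neq d(v,x)\}$. A set $W\subseteq V(G)$ is a local resolving set if $W\cap L(uv)\neq\emptyset$ for every edge $uv$; $\mathrm{ldim}(G)$ is the minimum cardinality of a local resolving set. A function $f:V(G)\to[0,1]$ is a local resolving function if $\sum_{x\in L(uv)}f(x)\geq 1$ for every edge $uv$; $\mathrm{ldim}_f(G)$ is the minimum of $\sum_v f(v)$ over all local resolving functions. *)

From HB Require Import structures.
From mathcomp Require Import all_boot all_order all_algebra.
Set Implicit Arguments. Unset Strict Implicit. Unset Printing Implicit Defensive.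
Import Order.TTheory GRing.Theory Num.Theory.

Section Graph.
Variable T : finType.
Variable e : rel T.

Definition simple_connected_graph : Prop :=
  symmetric e /\ irreflexive e /\ (forall u v : T, connect e u v).

Fixpoint ball (k : nat) (u : T) : {set T} :=
  match k with
  | 0 => [set u]
  | k'.+1 => ball k' u :|: [set y | [exists x in ball k' u, e x y]]
  end.

(* shortest-path distance: least k with v in ball k u
   (exact for connected graphs, where d(u,v) <= #|T| - 1) *)
Definition dist (u v : T) : nat :=
  \big[minn/#|T|]_(k < #|T|.+1 | v \in ball k u) (k : nat).

Definition Lset (u v : T) : {set T} := [set x | dist u x != dist v x].

Definition local_resolving_set (W : {set T}) : bool :=
  [forall u, forall v, e u v ==> (W :&: Lset u v != set0)].

(* ldim(G): minimum cardinality of a local resolving set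
   (V itself is local resolving, so the minimum is over a nonempty family) *)
Definition ldim : nat :=
  \big[minn/#|T|]_(W : {set T} | local_resolving_set W) #|W|.

Definition local_resolving_function (R : realFieldType) (f : T -> R) : Prop :=
  (forall x, 0 <= f x <= 1)%R /\
  (forall u v, e u v -> (1 <= \sum_(x in Lset u v) f x)%R).

End Graph.

(* If #|A| >= n - ldim(G) + 1, then ~: A is too small to be a local resolving
   set, so some L(uv) lies inside A and a local resolving function has weight
   at least 1 on A.  Any weighting that gives every set of at least m vertices
   weight at least 1 has total weight at least n / m: peeling off a heaviest
   vertex, the remaining k vertices have weight >= k / m by induction, hence
   the heaviest vertex has weight >= 1 / m. *)
From HB Require Import structures.
From mathcomp Require Import all_boot all_order all_algebra.
From mathcomp Require Import zify lra.
Import Order.TTheory GRing.Theory Num.Theory.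

Set Implicit Arguments.
Unset Strict Implicit.
Unset Printing Implicit Defensive.

Section LargeSetsHeavy.
Variables (R : realFieldType) (T : finType) (f : T -> R) (m : nat).
Hypothesis m_gt0 : (0 < m)%N.
Hypothesis large_set_heavy : forall A : {set T}, (m <= #|A|)%N ->
  (1 <= \sum_(x in A) f x)%R.

Lemma card_le_mul_sum (A : {set T}) : (m <= #|A|)%N ->
  (#|A|%:R <= m%:R * \sum_(x in A) f x)%R.
Proof.
move=> /subnKC; move: (#|A| - m)%N => k; elim: k A => [|k IHk] A cardA.
  rewrite -cardA addn0 -[leLHS]mulr1 ler_wpM2l //.
  by apply: large_set_heavy; rewrite -cardA addn0.
have [x0 Ax0] : exists x0, x0 \in A.
  by apply/set0Pn; rewrite -card_gt0 -cardA addnS.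
case: (arg_maxP f Ax0) => x Ax0x f_max; have Ax : x \in A := Ax0x.
have card_Ax : (m + k)%N = #|A :\ x| by move: cardA; rewrite (cardsD1 x) Ax; lia.
have IH_Ax : ((m + k)%:R <= m%:R * \sum_(y in A :\ x) f y)%R.
  by rewrite card_Ax; exact: IHk.
have sum_Ax_le : (\sum_(y in A :\ x) f y <= (m + k)%:R * f x)%R.
  rewrite card_Ax mulr_natl -sumr_const.
  by apply: ler_sum => y; rewrite inE => /andP[_ /f_max].
have heavy_x : (1 <= m%:R * f x)%R.
  have mk_gt0 : (0 < (m + k)%:R :> R)%R by rewrite ltr0n addn_gt0 m_gt0.
  rewrite -(ler_pM2l mk_gt0) mulr1 (le_trans IH_Ax) // mulrCA.
  by rewrite ler_wpM2l.
by rewrite -cardA (big_setD1 x Ax) /= addnS -addn1 natrD mulrDr; lra.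
Qed.

End LargeSetsHeavy.

Section LocalMetricDimension.
Variables (T : finType) (e : rel T).

Lemma ldim_le_card (W : {set T}) : local_resolving_set e W -> (ldim e <= #|W|)%N.
Proof. by move=> resW; rewrite /ldim -minEnat -leEnat; exact: bigmin_le_cond. Qed.

Lemma local_resolving_set0 u v : e u v -> ~~ local_resolving_set e set0.
Proof. by move=> uv; apply/forallP => /(_ u) /forallP /(_ v); rewrite uv set0I eqxx. Qed.

Lemma connected_has_edge : simple_connected_graph e -> (2 <= #|T|)%N ->
  exists u v, e u v.
Proof.
move=> [_ [_ conn]]; rewrite -cardsT => /card_gt1P[u [v [_ _ neq_uv]]].
have /connectP[[|w p] /= path_uv last_uv] := conn u v.
  by rewrite last_uv eqxx in neq_uv.
by exists u, w; case/andP: path_uv.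
Qed.

Lemma ldim_gt0 : simple_connected_graph e -> (2 <= #|T|)%N -> (0 < ldim e)%N.
Proof.
move=> G n_ge2; have [u [v uv]] := connected_has_edge G n_ge2.
rewrite /ldim -minEnat -leEnat.
apply: le_bigmin => [|W resW]; first exact: leq_trans n_ge2.
rewrite leEnat card_gt0; apply: (contraTneq _ resW) => ->.
exact: local_resolving_set0 uv.
Qed.

Lemma not_local_resolving_Lset_sub (A : {set T}) :
  ~~ local_resolving_set e (~: A) -> exists u v, e u v /\ Lset e u v \subset A.
Proof.
move=> /forallPn[u /forallPn[v]]; rewrite negb_imply negbK => /andP[uv L_A].
by exists u, v; rewrite uv -setD_eq0 setDE setIC.
Qed.

Lemma local_resolving_function_large_set (R : realFieldType) (f : T -> R) :
  local_resolving_function e f -> forall A : {set T},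
  (#|T| - ldim e + 1 <= #|A|)%N -> (1 <= \sum_(x in A) f x)%R.
Proof.
move=> [f01 fL] A cardA.
have : ~~ local_resolving_set e (~: A).
  apply: contraTN cardA => /ldim_le_card.
  by rewrite cardsCs setCK; have := max_card A; lia.
move=> /not_local_resolving_Lset_sub[u [v [uv /setIidPr LA]]].
rewrite (le_trans (fL u v uv)) // (big_setID (Lset e u v) (A := A)) /= LA lerDl.
by apply: sumr_ge0 => x _; case/andP: (f01 x).
Qed.

End LocalMetricDimension.

Theorem theorem2p12 (R : realFieldType) (T : finType) (e : rel T) :
  simple_connected_graph e -> 2 <= #|T| ->
  forall f : T -> R, local_resolving_function e f ->
  ((#|T|%:R / (#|T| - ldim e + 1)%:R) <= \sum_(v : T) f v)%R.
Proof.
move=> G n_ge2 f lrf.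
have m_gt0 : (0 < #|T| - ldim e + 1)%N by rewrite addn1.
have m_le_n : (#|T| - ldim e + 1 <= #|[set: T]|)%N.
  by rewrite cardsT; have := ldim_gt0 G n_ge2; lia.
have := card_le_mul_sum m_gt0 (local_resolving_function_large_set lrf) m_le_n.
by rewrite cardsT (eq_bigl _ _ (@in_setT T)) ler_pdivrMr ?ltr0n // mulrC.
Qed.
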